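(* The initial algebra of the endofunctor $F=M\otimes-$ on $\mathbf{Met_3}^{L}$ is the initial $F$-algebra $(G,g)$ of $\mathbf{Set_3}$ with $G$ endowed with the discrete metric.
   Context: A tripointed set is a set with three distinct distinguished points $T,L,R$; $\mathbf{Set_3}$ is the category of tripointed sets with maps preserving $T,L,R$. A tripointed metric space is a tripointed set with a metric bounded by $1$ in which $T,L,R$ have pairwise distance $1$; $\mathbf{Met_3}^{L}$ has these as objects and Lipschitz maps preserving $T,L,R$ as morphisms. Let $M=\{a,b,c\}$. $F=M\otimes-$: $M\otimes X$ is the quotient of $M\times X$ by the equivalence relation generated by $(b,T)\sim(a,L)$, $(a,R)\sim(c,T)$, $(c,L)\sim(b,R)$, elements written $m\otimes x$, distinguished points $a\otimes T$, $b\otimes L$, $c\otimes R$, and $(M\otimes f)(m\otimes x)=m\otimes f(x)$; in the metric setting $M\times X$ has metric $\tfrac12 d(x,y)$ within a copy and $1$ between different copies, and $M\otimes X$ has the quotient metric. An $F$-algebra is a pair $(A,\alpha\colon FA\to A)$, with algebra morphisms $h$ satisfying $h\circ\alpha=\beta\circ Fh$. Concretely, $G$ consists of expressions $m_0\otimes\cdots\otimes m_{n-1}\otimes z$ ($n\ge0$, $m_i\in M$, $z\in\{T,L,R\}$) modulo the identifications induced by the relations above and by $T=a\otimes T$, $L=b\otimes L$, $R=c\otimes R$ (the colimit in $\mathbf{Set_3}$ of $I\to FI\to F^2I\to\cdots$ with $I=\{T,L,R\}$), and $g(m\otimes w)=m\otimes w$. The discrete metric is $d(x,y)=1$ for $x\ne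 y$. *)

From Stdlib Require Import Reals List Relations ClassicalEpsilon.
From Coquelicot Require Import Coquelicot.
Open Scope R_scope.

Definition quot {A : Type} (Rl : A -> A -> Prop) : Type :=
  {P : A -> Prop | exists a, P = Rl a}.
Definition qclass {A : Type} (Rl : A -> A -> Prop) (a : A) : quot Rl :=
  exist (fun P => exists a', P = Rl a') (Rl a) (ex_intro _ a eq_refl).
Definition qrep {A : Type} {Rl : A -> A -> Prop} (P : quot Rl) : A :=
  proj1_sig (constructive_indefinite_description _ (proj2_sig P)).
Definition qin {A : Type} {Rl : A -> A -> Prop} (P : quot Rl) (a : A) : Prop :=
  proj1_sig P a.

Record Met3pre := { mcar :> Type; mdist : mcar -> mcar -> R;
                    mT : mcar; mL : mcar; mR : mcar }.

Definition is_met3 (X : Met3pre) : Prop :=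
  (forall x y : X, 0 <= mdist X x y) /\
  (forall x y : X, mdist X x y = 0 <-> x = y) /\
  (forall x y : X, mdist X x y = mdist X y x) /\
  (forall x y z : X, mdist X x z <= mdist X x y + mdist X y z) /\
  (forall x y : X, mdist X x y <= 1) /\
  mdist X (mT X) (mL X) = 1 /\ mdist X (mT X) (mR X) = 1 /\
  mdist X (mL X) (mR X) = 1.

Definition lipschitz (X Y : Met3pre) (f : X -> Y) : Prop :=
  exists K : R, 0 <= K /\ forall x y : X, mdist Y (f x) (f y) <= K * mdist X x y.
Definition preserves3 (X Y : Met3pre) (f : X -> Y) : Prop :=
  f (mT X) = mT Y /\ f (mL X) = mL Y /\ f (mR X) = mR Y.
Definition hom (X Y : Met3pre) (f : X -> Y) : Prop :=
  preserves3 X Y f /\ lipschitz X Y f.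

Inductive M := ma | mb | mc.
Definition M_eq_dec (m n : M) : {m = n} + {m <> n}.
Proof. decide equality. Defined.

Inductive tens_gen (X : Met3pre) : M * X -> M * X -> Prop :=
| tg1 : tens_gen X (mb, mT X) (ma, mL X)
| tg2 : tens_gen X (ma, mR X) (mc, mT X)
| tg3 : tens_gen X (mc, mL X) (mb, mR X).
Definition tens_eq (X : Met3pre) : M * X -> M * X -> Prop :=
  clos_refl_sym_trans _ (tens_gen X).

Definition Tens (X : Met3pre) : Type := quot (tens_eq X).
Definition tens (X : Met3pre) (m : M) (x : X) : Tens X := qclass (tens_eq X) (m, x).

Definition dMX (X : Met3pre) (p q : M * X) : R :=
  if M_eq_dec (fst p) (fst q) then / 2 * mdist X (snd p) (snd q) else 1.

(* chains [(p1,q1);...;(pn,qn)], n >= 1, p1 in P, qn in Q, q_i ~ p_(i+1) *)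
Fixpoint chain_link (X : Met3pre) (q : M * X) (c : list ((M * X) * (M * X)))
  (Q : Tens X) : Prop :=
  match c with
  | nil => qin Q q
  | (p', q') :: c' => tens_eq X q p' /\ chain_link X q' c' Q
  end.
Definition chain (X : Met3pre) (P Q : Tens X) (c : list ((M * X) * (M * X))) : Prop :=
  match c with
  | nil => False
  | (p, q) :: c' => qin P p /\ chain_link X q c' Q
  end.
Fixpoint chain_cost (X : Met3pre) (c : list ((M * X) * (M * X))) : R :=
  match c with
  | nil => 0
  | (p, q) :: c' => dMX X p q + chain_cost X c'
  end.
Definition qdist (X : Met3pre) (P Q : Tens X) : R :=
  real (Glb_Rbar (fun s => exists c, chain X P Q c /\ s = chain_cost X c)).

Definition FM (X : Met3pre) : Met3pre :=
  {| mcar := Tens X; mdist := qdist X;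
     mT := tens X ma (mT X); mL := tens X mb (mL X); mR := tens X mc (mR X) |}.

(** F-algebras in Met_3^L and their morphisms; (M (x) h)(m (x) x) = m (x) h x *)
Definition is_alg (A : Met3pre) (alpha : FM A -> A) : Prop := hom (FM A) A alpha.
Definition alg_morph (A B : Met3pre) (alpha : FM A -> A) (beta : FM B -> B)
  (h : A -> B) : Prop :=
  hom A B h /\ forall (m : M) (x : A), h (alpha (tens A m x)) = beta (tens B m (h x)).

Inductive Pt := pT | pL | pR.
(* expression m0 (x) ... (x) m_(n-1) (x) z  is  (m0 :: ... :: m_(n-1) :: nil, z) *)
Inductive G_gen : list M * Pt -> list M * Pt -> Prop :=
| gg1 w : G_gen (w ++ mb :: nil, pT) (w ++ ma :: nil, pL)
| gg2 w : G_gen (w ++ ma :: nil, pR) (w ++ mc :: nil, pT)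
| gg3 w : G_gen (w ++ mc :: nil, pL) (w ++ mb :: nil, pR)
| ggT w : G_gen (w, pT) (w ++ ma :: nil, pT)
| ggL w : G_gen (w, pL) (w ++ mb :: nil, pL)
| ggR w : G_gen (w, pR) (w ++ mc :: nil, pR).
Definition G_eq := clos_refl_sym_trans _ G_gen.
Definition Gcar : Type := quot G_eq.
Definition Gpt (z : Pt) : Gcar := qclass G_eq (nil, z).

Definition dG (x y : Gcar) : R :=
  if excluded_middle_informative (x = y) then 0 else 1.

Definition Gd : Met3pre :=
  {| mcar := Gcar; mdist := dG; mT := Gpt pT; mL := Gpt pL; mR := Gpt pR |}.

(* g(m (x) [w,z]) = [m w, z], defined via representatives *)
Definition g (u : FM Gd) : Gd :=
  let mx := qrep u in
  let wz := qrep (snd mx : Gcar) in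
  qclass G_eq (fst mx :: fst wz, snd wz).

From Stdlib Require Import Reals Lra List Relations FunctionalExtensionality PropExtensionality ProofIrrelevance ClassicalEpsilon.
From Coquelicot Require Import Coquelicot.
Open Scope R_scope.

(* Maps out of G are folds over the words m_0 ... m_(n-1) z; a fold is well defined as soon
   as the target satisfies the six identities generating G, and these hold in any tripointed
   F-algebra.  The base points of
   G are distinct because the Sierpinski corners separate them, so the discrete metric makes
   G a tripointed metric space.  All maps are Lipschitz for a cheap reason: a chain of cost
   < 1/2 in M x G can only glue equal points, so distinct points of M (x) G are at distance
   >= 1/2, while every target is bounded by 1. *)

Section Quotient.
Context {A : Type} (Rl : A -> A -> Prop) (HRl : equivalence A Rl).

Lemma quot_ext (P Q : quot Rl) : proj1_sig P = proj1_sig Q -> P = Q.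
Proof. destruct P, Q; simpl; intros; subst; f_equal; apply proof_irrelevance. Qed.

Lemma rel_class_eq a b : Rl a b -> Rl a = Rl b.
Proof.
  destruct HRl as [_ Htrans Hsym]; intros Hab.
  apply functional_extensionality; intros x; apply propositional_extensionality.
  split; intros H.
  - apply (Htrans _ a); auto.
  - apply (Htrans _ b); auto.
Qed.

Lemma qclass_eq a b : Rl a b -> qclass Rl a = qclass Rl b.
Proof. intros H; apply quot_ext, rel_class_eq, H. Qed.

Lemma qrep_spec (P : quot Rl) : proj1_sig P = Rl (qrep P).
Proof. unfold qrep; destruct constructive_indefinite_description; auto. Qed.

Lemma qclass_ind (Pr : quot Rl -> Prop) :
  (forall a, Pr (qclass Rl a)) -> forall P, Pr P.
Proof.
  intros H P; replace P with (qclass Rl (qrep P)); [apply H|].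
  apply quot_ext; symmetry; apply qrep_spec.
Qed.

Lemma qrep_qclass a : Rl a (qrep (qclass Rl a)).
Proof. pose proof (qrep_spec (qclass Rl a)) as E; simpl in E; rewrite E; apply HRl. Qed.

Lemma qin_qclass a : qin (qclass Rl a) a.
Proof. apply HRl. Qed.

Lemma qin_resp (Q : quot Rl) x y : qin Q x -> Rl y x -> qin Q y.
Proof.
  destruct HRl as [_ Htrans Hsym].
  destruct Q as [P [a ->]]; unfold qin; simpl; intros.
  apply (Htrans _ x); auto.
Qed.

Lemma qin_same (P Q : quot Rl) x : qin P x -> qin Q x -> P = Q.
Proof.
  destruct P as [P [a ->]], Q as [Q [b ->]]; unfold qin; simpl; intros Ha Hb.
  apply quot_ext; simpl; rewrite (rel_class_eq _ _ Ha), (rel_class_eq _ _ Hb); auto.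
Qed.
End Quotient.

Lemma G_eq_equiv : equivalence _ G_eq.
Proof. apply clos_rst_is_equiv. Qed.

Lemma tens_eq_equiv X : equivalence _ (tens_eq X).
Proof. apply clos_rst_is_equiv. Qed.

Lemma qclass_G_gen p q : G_gen p q -> qclass G_eq p = qclass G_eq q.
Proof. intros H; apply qclass_eq, rst_step, H; apply G_eq_equiv. Qed.

Lemma G_eq_cons m p q : G_eq p q -> G_eq (m :: fst p, snd p) (m :: fst q, snd q).
Proof.
  induction 1 as [p q H| p | p q _ IH | p q r _ IH1 _ IH2].
  - apply rst_step; destruct H;
      [ apply (gg1 (m :: w)) | apply (gg2 (m :: w)) | apply (gg3 (m :: w))
      | apply (ggT (m :: w)) | apply (ggL (m :: w)) | apply (ggR (m :: w)) ].
  - apply rst_refl.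
  - apply rst_sym; auto.
  - eapply rst_trans; eauto.
Qed.

Section WordFold.
Context {X : Type} (f : M -> X -> X) (pt : Pt -> X)
  (e1 : f mb (pt pT) = f ma (pt pL)) (e2 : f ma (pt pR) = f mc (pt pT))
  (e3 : f mc (pt pL) = f mb (pt pR)) (eT : pt pT = f ma (pt pT))
  (eL : pt pL = f mb (pt pL)) (eR : pt pR = f mc (pt pR)).

Definition word_fold (p : list M * Pt) : X := fold_right f (pt (snd p)) (fst p).

Lemma word_fold_resp p q : G_eq p q -> word_fold p = word_fold q.
Proof.
  induction 1 as [p q H| p | p q _ IH | p q r _ IH1 _ IH2]; try congruence.
  destruct H; unfold word_fold; simpl; rewrite ?fold_right_app; simpl; f_equal; congruence.
Qed.
End WordFold.

(* a, b, c act as the three contractions of the Sierpinski triangle with corners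
   T = (1,0), L = (0,1), R = (0,0). *)
Definition sierpinski_map (m : M) (p : R * R) : R * R :=
  match m with
  | ma => ((fst p + 1) / 2, snd p / 2)
  | mb => (fst p / 2, (snd p + 1) / 2)
  | mc => (fst p / 2, snd p / 2)
  end.

Definition sierpinski_corner (z : Pt) : R * R :=
  match z with pT => (1, 0) | pL => (0, 1) | pR => (0, 0) end.

Lemma Gpt_inj z1 z2 : Gpt z1 = Gpt z2 -> z1 = z2.
Proof.
  intros E.
  assert (Hz : G_eq (nil, z1) (nil, z2)).
  { pose proof (f_equal (@proj1_sig _ _) E) as E'; simpl in E'.
    rewrite E'; apply rst_refl. }
  apply (word_fold_resp sierpinski_map sierpinski_corner) in Hz;
    try (simpl; f_equal; field).
  destruct z1, z2; auto; simpl in Hz; injection Hz; lra.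
Qed.

Lemma dG_diag x : dG x x = 0.
Proof. unfold dG; destruct excluded_middle_informative; tauto. Qed.

Lemma dG_off x y : x <> y -> dG x y = 1.
Proof. unfold dG; destruct excluded_middle_informative; tauto. Qed.

Lemma dG_cases x y : (x = y /\ dG x y = 0) \/ (x <> y /\ dG x y = 1).
Proof.
  destruct (classic (x = y)) as [<-|Hn]; [left | right]; auto using dG_diag, dG_off.
Qed.

Lemma Gpt_dist z1 z2 : z1 <> z2 -> dG (Gpt z1) (Gpt z2) = 1.
Proof. intros Hz; apply dG_off; intros E; apply Hz, Gpt_inj, E. Qed.

Lemma dG_ge0 x y : 0 <= dG x y.
Proof. destruct (dG_cases x y) as [[_ ->]|[_ ->]]; lra. Qed.

Lemma Gd_met3 : is_met3 Gd.
Proof.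
  unfold is_met3; simpl; repeat split.
  - apply dG_ge0.
  - destruct (dG_cases x y) as [[? _]|[_ ->]]; auto; lra.
  - intros ->; apply dG_diag.
  - intros x y; destruct (classic (x = y)) as [<-|Hxy]; auto.
    rewrite !dG_off; auto.
  - intros x y z; destruct (dG_cases x z) as [[_ ->]|[Hxz ->]].
    + pose proof (dG_ge0 x y); pose proof (dG_ge0 y z); lra.
    + destruct (dG_cases x y) as [[<- ->]|[_ ->]].
      * rewrite (dG_off _ _ Hxz); lra.
      * pose proof (dG_ge0 y z); lra.
  - intros x y; destruct (dG_cases x y) as [[_ ->]|[_ ->]]; lra.
  - apply Gpt_dist; discriminate.
  - apply Gpt_dist; discriminate.
  - apply Gpt_dist; discriminate.
Qed.

Lemma lipschitz_of_separated (X Y : Met3pre) (f : X -> Y) (r : R) :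
  is_met3 Y -> 0 < r -> (forall x y : X, 0 <= mdist X x y) ->
  (forall x y : X, x <> y -> r <= mdist X x y) -> lipschitz X Y f.
Proof.
  intros [_ [Hd0 [_ [_ [Hle _]]]]] Hr Hge0 Hsep.
  exists (/ r); split; [left; apply Rinv_0_lt_compat, Hr|]. intros x y.
  destruct (classic (x = y)) as [<-|Hxy].
  - rewrite (proj2 (Hd0 _ _) eq_refl).
    apply Rmult_le_pos; [left; apply Rinv_0_lt_compat, Hr | apply Hge0].
  - specialize (Hsep _ _ Hxy); specialize (Hle (f x) (f y)).
    apply (Rle_trans _ 1); [exact Hle|].
    rewrite <- (Rinv_l r) by lra; apply Rmult_le_compat_l; [|exact Hsep].
    left; apply Rinv_0_lt_compat, Hr.
Qed.

Lemma glb_lower_bound (E : R -> Prop) (c s : R) :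
  E s -> (forall s', E s' -> c <= s') -> c <= real (Glb_Rbar E).
Proof.
  intros Hs Hc; destruct (Glb_Rbar_correct E) as [Hlb Hglb].
  assert (H1 := Hlb s Hs).
  assert (H2 : Rbar_le c (Glb_Rbar E)) by (apply Hglb; intros s' Hs'; apply Hc, Hs').
  destruct (Glb_Rbar E); simpl in *; tauto.
Qed.

Lemma chain_singleton X (P Q : Tens X) : exists c, chain X P Q c.
Proof.
  destruct P as [P [a ->]], Q as [Q [b ->]].
  exists ((a, b) :: nil); split; apply (qin_qclass _ (tens_eq_equiv X)).
Qed.

Section SeparatedTensor.
Variables (X : Met3pre) (delta : R).
Hypothesis dist_ge0 : forall x y : X, 0 <= mdist X x y.
Hypothesis dist_sep : forall x y : X, x <> y -> delta <= mdist X x y.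

Let r := Rmin 1 (delta / 2).

Lemma dMX_ge0 p q : 0 <= dMX X p q.
Proof.
  unfold dMX; destruct M_eq_dec; [|lra].
  apply Rmult_le_pos; [lra | apply dist_ge0].
Qed.

Lemma chain_cost_ge0 c : 0 <= chain_cost X c.
Proof.
  induction c as [|[p q] c IH]; simpl; [lra|]; pose proof (dMX_ge0 p q); lra.
Qed.

Lemma dMX_lt_sep p q : dMX X p q < r -> p = q.
Proof.
  destruct p as [m x], q as [n y]; unfold dMX, r; simpl.
  pose proof (Rmin_l 1 (delta / 2)); pose proof (Rmin_r 1 (delta / 2)).
  destruct M_eq_dec as [<-|]; [|lra]; intros Hlt.
  destruct (classic (x = y)) as [<-|Hxy]; auto.
  specialize (dist_sep _ _ Hxy); lra.
Qed.

(* Every link of a chain of cost < r is an identity, so the chain never leaves its class. *)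
Lemma chain_link_lt_sep (Q : Tens X) c q :
  chain_link X q c Q -> chain_cost X c < r -> qin Q q.
Proof.
  revert q; induction c as [|[p' q'] c IH]; simpl; auto.
  intros q [Hqp Hlink] Hc; pose proof (dMX_ge0 p' q'); pose proof (chain_cost_ge0 c).
  assert (p' = q') by (apply dMX_lt_sep; lra); subst q'.
  apply (qin_resp _ (tens_eq_equiv X) _ p'); auto; apply IH; auto; lra.
Qed.

Lemma qdist_ge0 (u v : Tens X) : 0 <= qdist X u v.
Proof.
  destruct (chain_singleton X u v) as [c0 Hc0].
  apply (glb_lower_bound _ _ (chain_cost X c0)); [eauto|].
  intros s [c [_ ->]]; apply chain_cost_ge0.
Qed.

Lemma qdist_sep (u v : Tens X) : u <> v -> r <= qdist X u v.
Proof.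
  intros Huv; destruct (chain_singleton X u v) as [c0 Hc0].
  apply (glb_lower_bound _ _ (chain_cost X c0)); [eauto|].
  intros s [c [Hc ->]]; destruct (Rle_or_lt r (chain_cost X c)) as [|Hlt]; auto.
  exfalso; destruct c as [|[p q] c]; simpl in Hc, Hlt; [tauto|]; destruct Hc as [Hp Hq].
  pose proof (dMX_ge0 p q); pose proof (chain_cost_ge0 c).
  assert (p = q) by (apply dMX_lt_sep; lra); subst q.
  apply Huv, (qin_same _ (tens_eq_equiv X) _ _ p); auto.
  apply (chain_link_lt_sep _ c); auto; lra.
Qed.
End SeparatedTensor.

Definition g_rep (p : M * Gcar) : Gcar :=
  qclass G_eq (fst p :: fst (qrep (snd p)), snd (qrep (snd p))).

Lemma g_rep_qclass m w z : g_rep (m, qclass G_eq (w, z)) = qclass G_eq (m :: w, z).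
Proof.
  apply qclass_eq; [apply G_eq_equiv|]; simpl.
  apply rst_sym, (G_eq_cons m (w, z)), (qrep_qclass _ G_eq_equiv).
Qed.

Lemma g_rep_resp p q : tens_eq Gd p q -> g_rep p = g_rep q.
Proof.
  induction 1 as [p q H| p | p q _ IH | p q r _ IH1 _ IH2]; try congruence.
  destruct H; simpl; unfold Gpt; rewrite !g_rep_qclass; simpl;
    [ apply (qclass_G_gen _ _ (gg1 nil)) | apply (qclass_G_gen _ _ (gg2 nil))
    | apply (qclass_G_gen _ _ (gg3 nil)) ].
Qed.

Lemma g_tens m w z : g (tens Gd m (qclass G_eq (w, z))) = qclass G_eq (m :: w, z).
Proof.
  rewrite <- g_rep_qclass.
  apply g_rep_resp, rst_sym, (qrep_qclass _ (tens_eq_equiv Gd)).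
Qed.

Lemma g_alg : is_alg Gd g.
Proof.
  split.
  - unfold preserves3; simpl; unfold Gpt; rewrite !g_tens; repeat split; symmetry;
      [ apply (qclass_G_gen _ _ (ggT nil)) | apply (qclass_G_gen _ _ (ggL nil))
      | apply (qclass_G_gen _ _ (ggR nil)) ].
  - apply (lipschitz_of_separated _ _ _ (Rmin 1 (1 / 2)) Gd_met3).
    + apply Rmin_pos; lra.
    + apply (qdist_ge0 Gd); apply Gd_met3.
    + apply (qdist_sep Gd).
      * apply Gd_met3.
      * intros x y Hxy; simpl; rewrite dG_off; auto; lra.
Qed.

Section Initiality.
Variables (A : Met3pre) (alpha : FM A -> A).
Hypothesis alpha_pres : preserves3 (FM A) A alpha.

Definition alpha_act (m : M) (x : A) : A := alpha (tens A m x).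

Definition A_pt (z : Pt) : A := match z with pT => mT A | pL => mL A | pR => mR A end.

Definition G_fold (x : Gd) : A := word_fold alpha_act A_pt (qrep x).

Lemma tens_gen_eq p q : tens_gen A p q -> tens A (fst p) (snd p) = tens A (fst q) (snd q).
Proof. destruct p, q; intros H; apply qclass_eq, rst_step, H; apply tens_eq_equiv. Qed.

Lemma G_fold_qclass p : G_fold (qclass G_eq p) = word_fold alpha_act A_pt p.
Proof.
  destruct alpha_pres as [PT [PL PR]].
  symmetry; apply word_fold_resp; [..| apply qrep_qclass, G_eq_equiv];
    unfold alpha_act; simpl; auto.
  - f_equal; exact (tens_gen_eq _ _ (tg1 A)).
  - f_equal; exact (tens_gen_eq _ _ (tg2 A)).
  - f_equal; exact (tens_gen_eq _ _ (tg3 A)).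
Qed.

Lemma G_fold_alg_morph : is_met3 A -> alg_morph Gd A g alpha G_fold.
Proof.
  intros HA; split; [split|].
  - unfold preserves3; simpl; unfold Gpt; rewrite !G_fold_qclass; auto.
  - apply (lipschitz_of_separated _ _ _ 1 HA); [lra | apply Gd_met3 |].
    intros x y Hxy; simpl; rewrite dG_off; auto; lra.
  - intros m; apply (qclass_ind G_eq); intros [w z].
    rewrite g_tens, !G_fold_qclass; reflexivity.
Qed.

Lemma alg_morph_eq_G_fold h : alg_morph Gd A g alpha h -> h = G_fold.
Proof.
  intros [[[PT [PL PR]] _] Hh].
  assert (Hwords : forall w z, h (qclass G_eq (w, z)) = word_fold alpha_act A_pt (w, z)).
  { induction w as [|m w IH]; intros z.
    - destruct z; assumption.
    - rewrite <- g_tens, Hh, IH; reflexivity. }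
  apply functional_extensionality, (qclass_ind G_eq); intros [w z].
  rewrite Hwords, G_fold_qclass; reflexivity.
Qed.
End Initiality.

Theorem mainTheorem4 :
  is_met3 Gd /\ is_alg Gd g /\
  (forall (A : Met3pre) (alpha : FM A -> A),
      is_met3 A -> is_alg A alpha ->
      exists! h : Gd -> A, alg_morph Gd A g alpha h).
Proof.
  split; [exact Gd_met3|]; split; [exact g_alg|].
  intros A alpha HA [Hpres _].
  exists (G_fold A alpha); split.
  - apply G_fold_alg_morph; assumption.
  - intros h Hh; symmetry; apply alg_morph_eq_G_fold; assumption.
Qed.
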